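(* Let $\bm\mu=(\mu_1,\dots,\mu_r)$ be finite positive Borel measures on the unit circle with infinite supports, fix the square-root branch as in the context, let $\bm n\in\mathbb N^r$ be $\phi$-normal for $\bm\mu$ and $\tau\in\partial\mathbb D$. Let $X\not\equiv0$ be a $\tau$-invariant paraorthogonal function for $\bm n$ (see context). Suppose that for every $z_0\in\mathbb C$ with $z_0\neq0$ and $|z_0|\neq1$, the index $\bm n$ is also $\phi$-normal with respect to the system $(|z-z_0|^2d\mu_1(z),\dots,|z-z_0|^2d\mu_r(z))$. Then the polynomial $z^{(|\bm n|+1)/2}X(z)$ has degree $|\bm n|+1$ and all of its $|\bm n|+1$ zeros lie on the unit circle $\partial\mathbb D$.
   Context: $\partial\mathbb D=\{|z|=1\}$. Fix $t_0\in\mathbb R$ and let $z^{k/2}=|z|^{k/2}\exp(ik\arg_{[t_0,t_0+2\pi)}(z)/2)$, $k\in\mathbb Z$. $|\bm n|=\sum_j n_j$; $\operatorname{span}\{z^p\}_{p=a}^b$ ($b-a\in\mathbb Z$) is the span of $z^a,z^{a+1},\dots,z^b$. For a system $\bm\nu=(\nu_1,\dots,\nu_r)$ of measures on $\partial\mathbb D$, $\bm n$ is $\phi$-normal w.r.t. $\bm\nu$ if there is a unique $\phi\in\operatorname{span}\{z^p\}_{p=-|\bm n|/2}^{|\bm n|/2}$ with coefficient of $z^{|\bm n|/2}$ equal to $1$ such that $\int\phi(z)z^{-p}\,d\nu_j(z)=0$ for $p=-n_j/2,\dots,n_j/2-1$, $j=1,\dots,r$. A $\tau$-invariant paraorthogonal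 function for $\bm n$ is any $X\in\operatorname{span}\{z^p\}_{p=-(|\bm n|+1)/2}^{(|\bm n|+1)/2}$ with $X(z)=\tau\overline{X(1/\bar z)}$ and $\int X(z)z^{-p}\,d\mu_j(z)=0$ for $p=-(n_j-1)/2,\dots,(n_j-1)/2$, $j=1,\dots,r$. (For example, $z^{1/2}\phi_{\bm n}(z)+\tau z^{-1/2}\overline{\phi_{\bm n}(1/\bar z)}$.) Note $z^{(|\bm n|+1)/2}X(z)$ is a polynomial of degree at most $|\bm n|+1$; zeros of $X$ refer to zeros of this polynomial. *)

From HB Require Import structures.
From mathcomp Require Import all_boot all_order all_algebra.
From mathcomp Require Import all_classical all_reals all_analysis.
From mathcomp Require Import complex.

Set Implicit Arguments.
Unset Strict Implicit.
Unset Printing Implicit Defensive.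
Import Order.TTheory GRing.Theory Num.Theory.
Import numFieldNormedType.Exports.

Local Open Scope classical_set_scope.
Local Open Scope ring_scope.
Local Open Scope complex_scope.

Section Defs.
Variable R : realType.
Local Notation C := R[i].

Definition expi (t : R) : C := cos t +i* sin t.

(* arg_{[t0, t0+2pi)}(z): the unique angle in [t0, t0+2pi) with
   z = |z| e^{i arg z}  (for z <> 0; for z = 0 an arbitrary value). *)
Definition argc (t0 : R) (z : C) : R :=
  xget t0 [set t : R | t0 <= t < t0 + 2 * pi /\ z = (Normc.normc z)%:C * expi t].

Definition hpow (t0 : R) (k : int) (z : C) : C :=
  ((Num.sqrt (Normc.normc z)) ^ k)%:C * expi (k%:~R * argc t0 z / 2).

(* the element  sum_{j=0}^{N} c_j z^{(2j - N)/2}  of span{z^p}_{p=-N/2}^{N/2};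
   c is the coefficient polynomial (of size <= N+1), so c`_N is the
   coefficient of z^{N/2}. *)
Definition lfun (t0 : R) (N : nat) (c : {poly C}) (z : C) : C :=
  \sum_(j < N.+1) c`_j * hpow t0 (2 * (j : nat)%:Z - N%:Z) z.

(* integral over the circle of f (a function on C) with respect to the
   measure  w d(mu) , where mu is a measure on the angle variable
   theta in [t0, t0+2pi) and z = e^{i theta}; complex integral = integral of
   real part + i * integral of imaginary part. *)
Definition cint (mu : {measure set R -> \bar R}) (w : R -> R) (f : C -> C) : C :=
  (Rintegral mu setT (fun t => w t * complex.Re (f (expi t))))
  +i* (Rintegral mu setT (fun t => w t * complex.Im (f (expi t)))).

Definition nsum (r : nat) (n : 'I_r -> nat) : nat := (\sum_(j < r) n j)%N.

Definition phi_normal (t0 : R) (r : nat) (mu : 'I_r -> {measure set R -> \bar R})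
    (w : R -> R) (n : 'I_r -> nat) : Prop :=
  let N := nsum n in
  exists! c : {poly C},
    [/\ (size c <= N.+1)%N, c`_N = 1 &
      forall (j : 'I_r) (k : nat), (k < n j)%N ->
        (* p = -n_j/2 + k, z^{-p} = z^{(n_j - 2k)/2} *)
        cint (mu j) w (fun z => lfun t0 N c z * hpow t0 ((n j)%:Z - 2 * k%:Z) z) = 0].

(* X = lfun t0 (|n|+1) d is a tau-invariant paraorthogonal function for n *)
Definition paraorthogonal (t0 : R) (r : nat) (mu : 'I_r -> {measure set R -> \bar R})
    (n : 'I_r -> nat) (tau : C) (d : {poly C}) : Prop :=
  let N := nsum n in
  [/\ (size d <= N.+2)%N,
      (forall z : C, z != 0 ->
         lfun t0 N.+1 d z = tau * (lfun t0 N.+1 d (conjc z)^-1)^*) &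
      forall (j : 'I_r) (k : nat), (k < n j)%N ->
        (* p = -(n_j - 1)/2 + k, z^{-p} = z^{(n_j - 1 - 2k)/2} *)
        cint (mu j) (fun _ => 1)
          (fun z => lfun t0 N.+1 d z * hpow t0 ((n j)%:Z - 1 - 2 * k%:Z) z) = 0].

Definition msupport (mu : {measure set R -> \bar R}) : set R :=
  [set t | forall e : R, 0 < e -> (0 < mu (ball t e))%E].

End Defs.

(* On the circle z = e^{ix} the function sum_j c_j z^{(2j-N)/2} equals
   e^{-iNx/2} c(e^{ix}), so X is encoded by the polynomial d = z^{(|n|+1)/2} X,
   and tau-invariance of X says that d equals its reciprocal
   tau z^{|n|+1} conj(d(1/conj z)).  If d = Y P with P(e^{ix}) = w(x) a e^{ix}
   for a constant a != 0, the paraorthogonality relations of X against mu are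
   exactly the phi-orthogonality relations of a Y against w dmu, so uniqueness
   in phi-normality forces Y = 0.  With P = z and w = 1 this rules out
   deg d <= |n| (reciprocity then gives d(0) = 0).  A zero z0 of d off the
   circle comes with the zero 1/conj z0, and P = (z - 1/conj z0)(z - z0)
   satisfies P(e^{ix}) = -|e^{ix} - z0|^2 e^{ix} / conj z0, so normality for
   |z - z0|^2 dmu gives the contradiction. *)

From HB Require Import structures.
From mathcomp Require Import all_boot all_order all_algebra.
From mathcomp Require Import all_classical all_reals all_analysis.
From mathcomp Require Import complex.
From mathcomp Require Import measurable_realfun.
From mathcomp Require Import ring lra zify.

Set Implicit Arguments.
Unset Strict Implicit.
Unset Printing Implicit Defensive.
Import Order.TTheory GRing.Theory Num.Theory.
Import numFieldNormedType.Exports.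
Local Open Scope classical_set_scope.
Local Open Scope ring_scope.
Local Open Scope complex_scope.

Section ParaorthogonalZeros.
Variable R : realType.
Local Notation C := R[i].
Implicit Types (x y : R) (k : int).

(* Stated for [conjc] itself, so that rewrites keyed on [conjc] apply to the results. *)
Lemma conjcM (a b : C) : conjc (a * b) = conjc a * conjc b.
Proof. exact: rmorphM. Qed.

Lemma conjcB (a b : C) : conjc (a - b) = conjc a - conjc b.
Proof. exact: rmorphB. Qed.

Lemma expiD x y : expi x * expi y = expi (x + y) :> C.
Proof.
rewrite /expi cosD sinD; apply/eqP; rewrite eq_complex /=.
by apply/andP; split; apply/eqP; ring.
Qed.

Lemma expi0 : expi 0 = 1 :> C.
Proof. by rewrite /expi cos0 sin0. Qed.

Lemma conj_expi x : conjc (expi x) = expi (- x) :> C.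
Proof. by rewrite /expi cosN sinN. Qed.

Lemma normc_expi x : Normc.normc (expi x) = 1.
Proof. by rewrite /Normc.normc /expi /= cos2Dsin2 sqrtr1. Qed.

Lemma expi_neq0 x : expi x != 0 :> C.
Proof.
apply: contra_neq (oner_neq0 R) => ex0.
by rewrite -(normc_expi x) ex0 /Normc.normc /= expr0n addr0 sqrtr0.
Qed.

Lemma expiN x : expi (- x) = (expi x)^-1 :> C.
Proof. by apply: (mulfI (expi_neq0 x)); rewrite expiD subrr expi0 mulfV ?expi_neq0. Qed.

Lemma inv_conj_expi x : (conjc (expi x))^-1 = expi x :> C.
Proof. by rewrite conj_expi expiN invrK. Qed.

Lemma expiDz x k : expi (x + 2 * pi * k%:~R) = expi x :> C.
Proof.
have expiDn y (m : nat) : expi (y + 2 * pi * m%:R) = expi y :> C.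
  by rewrite /expi mulr_natl mulr_natr (periodicn (@cosD2pi R)) (periodicn (@sinD2pi R)).
case: k => m; first exact: expiDn.
by rewrite NegzE mulrNz mulrN -[in RHS](subrK (2 * pi * m.+1%:R) x) expiDn.
Qed.

Lemma sin_eq0_itv x : - pi < x < pi -> sin x = 0 -> x = 0.
Proof.
move=> /andP[xgt xlt] sx0; case: (ltgtP x 0) => // [xneg|xpos].
- have : 0 < sin (- x) by apply: sin_gt0_pi; lra.
  by rewrite sinN sx0 oppr0 ltxx.
- have : 0 < sin x by apply: sin_gt0_pi; lra.
  by rewrite sx0 ltxx.
Qed.

(* [cos x = 1] forces [sin (x / 2) = 0] by the double angle formula. *)
Lemma expi_eq1 x : - (2 * pi) < x < 2 * pi -> expi x = 1 -> x = 0.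
Proof.
move=> xitv [cx1 _].
have xE : x = x / 2 + x / 2 by field.
have : sin (x / 2) ^+ 2 = 0.
  move: cx1; rewrite {1}xE cosD; have := cos2Dsin2 (x / 2).
  by rewrite !expr2; lra.
move/eqP; rewrite sqrf_eq0 => /eqP /sin_eq0_itv sx0.
by rewrite xE sx0 ?addr0 //; lra.
Qed.

Variable t0 : R.

(** * Half-integer powers on the unit circle *)

Lemma expi_inj_itv x y : t0 <= x < t0 + 2 * pi -> t0 <= y < t0 + 2 * pi ->
  expi x = expi y :> C -> x = y.
Proof.
move=> xitv yitv exy; apply/eqP; rewrite -subr_eq0; apply/eqP/expi_eq1; first lra.
by rewrite -expiD exy expiD subrr expi0.
Qed.

Lemma pi2_gt0 : 0 < 2 * pi :> R.
Proof. by rewrite mulr_gt0 ?pi_gt0. Qed.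

Definition reduce_angle x := x - 2 * pi * (Num.floor ((x - t0) / (2 * pi)))%:~R.

Lemma reduce_angle_itv x : t0 <= reduce_angle x < t0 + 2 * pi.
Proof.
rewrite /reduce_angle; have := pi2_gt0; set P := 2 * pi => Pgt0.
set q := (x - t0) / P; have xE : x - t0 = P * q by rewrite mulrC divfK ?gt_eqF.
have /andP[qge qlt] := floor_itv q; rewrite intrD in qlt.
have ge : P * (Num.floor q)%:~R <= P * q by rewrite ler_pM2l.
have lt : P * q < P * (Num.floor q)%:~R + P.
  by rewrite -[X in _ + X]mulr1 -mulrDr ltr_pM2l.
lra.
Qed.

Lemma expi_reduce_angle x : expi (reduce_angle x) = expi x :> C.
Proof. by rewrite /reduce_angle -mulrN -mulrNz expiDz. Qed.

Lemma measurable_reduce_angle : measurable_fun setT reduce_angle.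
Proof.
apply: measurable_funB => //; apply: measurable_funM => //.
apply: nondecreasing_measurable => // x y xy.
by rewrite ler_int le_floor // ler_pM2r ?invr_gt0 ?pi2_gt0 // lerD2r.
Qed.

Lemma argc_expi x : argc t0 (expi x) = reduce_angle x.
Proof.
apply: xget_unique.
  by split; [exact: reduce_angle_itv | rewrite normc_expi mul1r expi_reduce_angle].
move=> y [yitv]; rewrite normc_expi mul1r -(expi_reduce_angle x) => exy.
exact: expi_inj_itv yitv (reduce_angle_itv x) (esym exy).
Qed.

Definition hexp x k : C := expi (k%:~R * (reduce_angle x / 2)).

Lemma hpow_expi k x : hpow t0 k (expi x) = hexp x k.
Proof.
by rewrite /hpow /hexp normc_expi sqrtr1 exp1rz argc_expi mul1r mulrA.
Qed.

Lemma hexpD x k l : hexp x k * hexp x l = hexp x (k + l).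
Proof. by rewrite /hexp expiD -mulrDl -intrD. Qed.

Lemma hexp_neq0 x k : hexp x k != 0.
Proof. exact: expi_neq0. Qed.

Lemma conj_hexp x k : conjc (hexp x k) = hexp x (- k).
Proof. by rewrite /hexp conj_expi intrN mulNr. Qed.

Lemma hexp2 x : hexp x 2 = expi x.
Proof. by rewrite /hexp mulrC divfK ?pnatr_eq0 ?expi_reduce_angle. Qed.

Lemma hexp_even x (m : nat) : hexp x (2 * m%:Z) = expi x ^+ m.
Proof.
elim: m => [|m IH]; first by rewrite mulr0 /hexp mul0r expi0.
by rewrite intS mulrDr mulr1 -hexpD IH hexp2 exprS.
Qed.

Lemma lfun_expi N (c : {poly C}) x : (size c <= N.+1)%N ->
  lfun t0 N c (expi x) = hexp x (- N%:Z) * c.[expi x].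
Proof.
move=> szc; rewrite /lfun (horner_coef_wide _ szc) mulr_sumr.
by apply: eq_bigr => j _; rewrite hpow_expi -hexp_even mulrCA hexpD addrC.
Qed.

Lemma lfun0 N z : lfun t0 N 0 z = 0.
Proof. by rewrite /lfun big1 // => j _; rewrite coef0 mul0r. Qed.

Lemma lfunD N (c e : {poly C}) z : lfun t0 N (c + e) z = lfun t0 N c z + lfun t0 N e z.
Proof. by rewrite /lfun -big_split; apply: eq_bigr => j _; rewrite coefD mulrDl. Qed.

Lemma poly_eq0_on_circle (p : {poly C}) : (forall x, p.[expi x] = 0) -> p = 0.
Proof.
move=> p0; set m := size p.
pose delta := 2 * pi / m.+1%:R : R.
have delta_gt0 : 0 < delta by rewrite divr_gt0 ?pi2_gt0 ?ltr0n.
have itv i : (i < m)%N -> t0 <= t0 + i%:R * delta < t0 + 2 * pi.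
  move=> im; rewrite lerDl mulr_ge0 ?ler0n ?ltW //= ltrD2l /delta mulrCA.
  by rewrite gtr_pMr ?pi2_gt0 // ltr_pdivrMr ?ltr0n // mul1r ltr_nat ltnS ltnW.
apply: (@roots_geq_poly_eq0 _ p [seq expi (t0 + i%:R * delta) | i <- iota 0 m]).
- by apply/allP => z /mapP [i _ ->]; rewrite /root p0.
- rewrite map_inj_in_uniq ?iota_uniq // => i j.
  rewrite !mem_iota !add0n => /itv iitv /itv jitv /(expi_inj_itv iitv jitv).
  by move=> /addrI /(mulIf (lt0r_neq0 delta_gt0)) /eqP; rewrite eqr_nat => /eqP.
- by rewrite size_map size_iota.
Qed.

(** * Reciprocal polynomials *)

Definition recip_poly N (tau : C) (d : {poly C}) :=
  \poly_(i < N.+1) (tau * conjc d`_(N - i)).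

Lemma horner_recip_poly N tau (d : {poly C}) z : (size d <= N.+1)%N -> z != 0 ->
  (recip_poly N tau d).[(conjc z)^-1] = tau * (conjc z)^-1 ^+ N * conjc d.[z].
Proof.
move=> szd z0; set w := (conjc z)^-1.
have wz : w * conjc z = 1 by rewrite mulVf ?conjc_eq0.
rewrite (horner_coef_wide _ (size_poly _ _)) (horner_coef_wide _ szd).
rewrite rmorph_sum mulr_sumr (reindex_inj rev_ord_inj); apply: eq_bigr => i _ /=.
have iN := ltn_ord i; rewrite coef_poly ifT; last by lia.
rewrite (_ : (N - (N.+1 - i.+1))%N = i); last by lia.
have wN : w ^+ N = w ^+ (N.+1 - i.+1) * w ^+ i by rewrite -exprD; congr (_ ^+ _); lia.
rewrite conjcM rmorphXn wN.
rewrite [RHS](_ : _ = tau * conjc d`_i * w ^+ (N.+1 - i.+1) * (w * conjc z) ^+ i).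
  by rewrite wz expr1n mulr1.
by rewrite exprMn; ring.
Qed.

Lemma recip_poly_root0 N tau (d : {poly C}) :
  d = recip_poly N tau d -> size d = N.+1 -> ~~ root d 0.
Proof.
move=> dE szd; rewrite /root horner_coef0.
have : lead_coef d != 0 by rewrite lead_coef_eq0 -size_poly_eq0 szd.
rewrite lead_coefE szd /= {1}dE coef_poly ltnSn subnn mulf_eq0 negb_or => /andP[_].
by rewrite conjc_eq0.
Qed.

Lemma recip_poly_root_inv_conj N tau (d : {poly C}) z :
  d = recip_poly N tau d -> (size d <= N.+1)%N -> z != 0 -> root d z -> root d (conjc z)^-1.
Proof.
by move=> dE szd z0 dz; rewrite /root {1}dE horner_recip_poly // (eqP dz) conjc0 mulr0.
Qed.

Lemma tau_invariant_recip_poly N tau (d : {poly C}) : (size d <= N.+2)%N ->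
  (forall z, z != 0 -> lfun t0 N.+1 d z = tau * conjc (lfun t0 N.+1 d (conjc z)^-1)) ->
  d = recip_poly N.+1 tau d.
Proof.
move=> szd dinv; apply/eqP; rewrite -subr_eq0; apply/eqP/poly_eq0_on_circle => x.
rewrite hornerD hornerN; apply/eqP; rewrite subr_eq0; apply/eqP.
apply: (mulfI (hexp_neq0 x (- N.+1%:Z))).
rewrite -lfun_expi // dinv ?expi_neq0 // inv_conj_expi lfun_expi // conjcM conj_hexp.
rewrite -{2}(inv_conj_expi x) horner_recip_poly ?expi_neq0 // inv_conj_expi -hexp_even.
rewrite (_ : - - N.+1%:Z = - N.+1%:Z + 2 * N.+1%:Z); last by lia.
by rewrite -hexpD; ring.
Qed.

(** * Integrals against bounded measurable weights *)

Definition bounded_measurable (f : R -> R) :=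
  measurable_fun setT f /\ exists M, forall x, `|f x| <= M.

Definition cbounded_measurable (g : R -> C) :=
  bounded_measurable (fun x => complex.Re (g x)) /\
  bounded_measurable (fun x => complex.Im (g x)).

Lemma bounded_measurable_cst a : bounded_measurable (fun=> a).
Proof. by split; [exact: measurable_cst | exists `|a|]. Qed.

Lemma bounded_measurableD f g : bounded_measurable f -> bounded_measurable g ->
  bounded_measurable (fun x => f x + g x).
Proof.
move=> [mf [M fM]] [mg [M' gM']]; split; first exact: measurable_funD.
by exists (M + M') => x; exact: le_trans (ler_normD _ _) (lerD (fM x) (gM' x)).
Qed.

Lemma bounded_measurableN f : bounded_measurable f -> bounded_measurable (fun x => - f x).
Proof.
move=> [mf [M fM]]; split; first exact: measurable_funN.
by exists M => x; rewrite normrN.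
Qed.

Lemma bounded_measurableM f g : bounded_measurable f -> bounded_measurable g ->
  bounded_measurable (fun x => f x * g x).
Proof.
move=> [mf [M fM]] [mg [M' gM']]; split; first exact: measurable_funM.
by exists (M * M') => x; rewrite normrM; exact: ler_pM.
Qed.

Lemma bounded_measurable_cos f : measurable_fun setT f ->
  bounded_measurable (fun x => cos (f x)).
Proof.
move=> mf; split; last by exists 1 => x; exact: cos_max.
exact: measurableT_comp (continuous_measurable_fun (@continuous_cos R)) mf.
Qed.

Lemma bounded_measurable_sin f : measurable_fun setT f ->
  bounded_measurable (fun x => sin (f x)).
Proof.
move=> mf; split; last by exists 1 => x; exact: sin_max.
exact: measurableT_comp (continuous_measurable_fun (@continuous_sin R)) mf.
Qed.

Lemma bounded_measurable_integrable (mu : {measure set R -> \bar R}) f :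
  (mu setT < +oo)%E -> bounded_measurable f -> mu.-integrable setT (EFin \o f).
Proof.
move=> mufin [mf [M fM]]; apply: measurable_bounded_integrable => //.
exists M; split; first exact: num_real.
by move=> y My x _; exact: le_trans (fM x) (ltW My).
Qed.

Lemma cbounded_measurable_cst (a : C) : cbounded_measurable (fun=> a).
Proof. by split; apply: bounded_measurable_cst. Qed.

Lemma cbounded_measurableD f g : cbounded_measurable f -> cbounded_measurable g ->
  cbounded_measurable (fun x => f x + g x).
Proof.
move=> [fRe fIm] [gRe gIm]; split.
- rewrite (_ : (fun x => _) = fun x => complex.Re (f x) + complex.Re (g x)).
    exact: bounded_measurableD.
  by apply: funext => x; case: (f x) => ? ?; case: (g x).
- rewrite (_ : (fun x => _) = fun x => complex.Im (f x) + complex.Im (g x)).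
    exact: bounded_measurableD.
  by apply: funext => x; case: (f x) => ? ?; case: (g x).
Qed.

Lemma cbounded_measurableM f g : cbounded_measurable f -> cbounded_measurable g ->
  cbounded_measurable (fun x => f x * g x).
Proof.
move=> [fRe fIm] [gRe gIm]; split.
- rewrite (_ : (fun x => _) = fun x => complex.Re (f x) * complex.Re (g x)
                                     + - (complex.Im (f x) * complex.Im (g x))).
    by apply: bounded_measurableD; [|apply: bounded_measurableN]; apply: bounded_measurableM.
  by apply: funext => x; case: (f x) => ? ?; case: (g x).
- rewrite (_ : (fun x => _) = fun x => complex.Re (f x) * complex.Im (g x)
                                     + complex.Im (f x) * complex.Re (g x)).
    by apply: bounded_measurableD; apply: bounded_measurableM.
  by apply: funext => x; case: (f x) => ? ?; case: (g x).
Qed.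

Lemma cbounded_measurable_sum (I : Type) (s : seq I) (P : pred I) (F : I -> R -> C) :
  (forall i, cbounded_measurable (F i)) ->
  cbounded_measurable (fun x => \sum_(i <- s | P i) F i x).
Proof.
move=> Fb; elim: s => [|i s IH].
  by under eq_fun do rewrite big_nil; exact: cbounded_measurable_cst.
under eq_fun do rewrite big_cons.
by case: (P i) => //; exact: cbounded_measurableD.
Qed.

Lemma cbounded_measurable_hexp k : cbounded_measurable (fun x => hexp x k).
Proof.
have mk : measurable_fun setT (fun x => k%:~R * (reduce_angle x / 2)).
  by apply: measurable_funM => //; apply: measurable_funM => //; exact: measurable_reduce_angle.
by split; [exact: bounded_measurable_cos | exact: bounded_measurable_sin].
Qed.

Lemma cbounded_measurable_lfun_hpow N (c : {poly C}) k :
  cbounded_measurable (fun x => lfun t0 N c (expi x) * hpow t0 k (expi x)).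
Proof.
under eq_fun do rewrite /lfun mulr_suml.
apply: cbounded_measurable_sum => j; under eq_fun do rewrite !hpow_expi -mulrA.
apply: cbounded_measurableM; first exact: cbounded_measurable_cst.
by apply: cbounded_measurableM; exact: cbounded_measurable_hexp.
Qed.

Lemma normc_sqrE (u : C) : Normc.normc u ^+ 2 = complex.Re u ^+ 2 + complex.Im u ^+ 2.
Proof. by case: u => a b /=; rewrite sqr_sqrtr // addr_ge0 ?sqr_ge0. Qed.

Lemma normc_sqr_conj (u : C) : (Normc.normc u ^+ 2)%:C = u * conjc u.
Proof.
rewrite normc_sqrE; case: u => a b; apply/eqP; rewrite eq_complex /=.
by apply/andP; split; apply/eqP; ring.
Qed.

Lemma horner_reflected_pair_expi z : z != 0 -> forall x,
  (\prod_(w <- [:: (conjc z)^-1; z]) ('X - w%:P)).[expi x] =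
  (Normc.normc (expi x - z) ^+ 2)%:C * (- (conjc z)^-1 * expi x).
Proof.
move=> z0 x; set z1 := (conjc z)^-1.
have z1z : z1 * conjc z = 1 by rewrite mulVf ?conjc_eq0.
have ee : expi x * conjc (expi x) = 1 by rewrite conj_expi expiD subrr expi0.
rewrite !big_cons big_nil mulr1 hornerM !hornerXsubC normc_sqr_conj conjcB.
set e := expi x in ee *.
rewrite [RHS](_ : _ = (e - z) * (- z1 * (e * conjc e) + e * (z1 * conjc z))); last by ring.
by rewrite ee z1z; ring.
Qed.

Lemma bounded_measurable_sqr_dist (z0 : C) :
  bounded_measurable (fun x => Normc.normc (expi x - z0) ^+ 2).
Proof.
have sqr_shift f c : bounded_measurable f -> bounded_measurable (fun x => (f x - c) ^+ 2).
  move=> fb; under eq_fun do rewrite expr2.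
  by apply: bounded_measurableM; apply: bounded_measurableD => //; exact: bounded_measurable_cst.
case: z0 => a b; under eq_fun do rewrite normc_sqrE /=.
apply: bounded_measurableD; apply: sqr_shift.
- exact: (@bounded_measurable_cos id).
- exact: (@bounded_measurable_sin id).
Qed.

Lemma cintD (mu : {measure set R -> \bar R}) w (f g : C -> C) : (mu setT < +oo)%E ->
  bounded_measurable w -> cbounded_measurable (f \o @expi R) -> cbounded_measurable (g \o @expi R) ->
  cint mu w (fun z => f z + g z) = cint mu w f + cint mu w g.
Proof.
move=> mufin wb [fRe fIm] [gRe gIm]; rewrite /cint.
rewrite (_ : (fun x => w x * complex.Re (f (expi x) + g (expi x))) =
  fun x => w x * complex.Re (f (expi x)) + w x * complex.Re (g (expi x))); last first.
  by apply: funext => x; case: (f (expi x)) => ? ?; case: (g (expi x)) => ? ? /=; rewrite mulrDr.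
rewrite (_ : (fun x => w x * complex.Im (f (expi x) + g (expi x))) =
  fun x => w x * complex.Im (f (expi x)) + w x * complex.Im (g (expi x))); last first.
  by apply: funext => x; case: (f (expi x)) => ? ?; case: (g (expi x)) => ? ? /=; rewrite mulrDr.
by rewrite !RintegralD //; apply: bounded_measurable_integrable => //; apply: bounded_measurableM.
Qed.

Lemma cint_weight (mu : {measure set R -> \bar R}) w (F G : C -> C) :
  (forall x, F (expi x) = (w x)%:C * G (expi x)) -> cint mu (fun=> 1) F = cint mu w G.
Proof.
move=> FG; rewrite /cint; congr (_ +i* _); congr Rintegral; apply: funext => x;
  by rewrite FG; case: (G (expi x)) => a b /=; rewrite mul1r ?mul0r ?subr0 ?addr0.
Qed.

Lemma phi_normal_kernel r (mu : 'I_r -> {measure set R -> \bar R}) w n (Y : {poly C}) :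
  (forall j, (mu j setT < +oo)%E) -> bounded_measurable w -> phi_normal t0 mu w n ->
  (size Y <= nsum n)%N ->
  (forall j i, (i < n j)%N -> cint (mu j) w
     (fun z => lfun t0 (nsum n) Y z * hpow t0 ((n j)%:Z - 2 * i%:Z) z) = 0) ->
  Y = 0.
Proof.
move=> mufin wb [c [[szc cN cortho] cuniq]] szY Yortho.
apply: (@addrI _ c); rewrite addr0; symmetry; apply: cuniq; split.
- by rewrite (leq_trans (size_add _ _)) // geq_max szc (leq_trans szY).
- by rewrite coefD cN nth_default ?addr0.
- move=> j i ijn; under eq_fun do rewrite lfunD mulrDl.
  by rewrite cintD ?cortho ?Yortho ?addr0 //; exact: cbounded_measurable_lfun_hpow.
Qed.

Lemma paraorthogonal_factor_eq0 r (mu : 'I_r -> {measure set R -> \bar R}) n tau w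
    (Y P : {poly C}) (a : C) :
  (forall j, (mu j setT < +oo)%E) -> bounded_measurable w -> phi_normal t0 mu w n ->
  paraorthogonal t0 mu n tau (Y * P) -> (size Y <= nsum n)%N ->
  (forall x, P.[expi x] = (w x)%:C * (a * expi x)) -> a != 0 -> Y = 0.
Proof.
set N := nsum n => mufin wb wnormal [szYP _ YPortho] szY PE a0.
have szaY : (size (a *: Y) <= N)%N by rewrite (leq_trans (size_scale_leq _ _)).
suff /eqP : a *: Y = 0 by rewrite scaler_eq0 (negbTE a0) => /eqP.
apply: (phi_normal_kernel mufin wb wnormal szaY) => j i ijn.
rewrite -(YPortho j i ijn); symmetry; apply: cint_weight => x.
rewrite !lfun_expi ?(leq_trans szaY) // !hpow_expi hornerM hornerZ PE.
set y := Y.[expi x]; rewrite -hexp2.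
rewrite [LHS](_ : _ = (w x)%:C * (a * y) *
  (hexp x (- N.+1%:Z) * hexp x 2 * hexp x ((n j)%:Z - 1 - 2 * i%:Z))); last by ring.
rewrite [RHS](_ : _ = (w x)%:C * (a * y) *
  (hexp x (- N%:Z) * hexp x ((n j)%:Z - 2 * i%:Z))); last by ring.
by rewrite !hexpD; congr (_ * hexp x _); lia.
Qed.

(** * Degree and zeros of paraorthogonal functions *)

Lemma paraorthogonal_size r (mu : 'I_r -> {measure set R -> \bar R}) n tau (d : {poly C}) :
  (forall j, (mu j setT < +oo)%E) -> phi_normal t0 mu (fun=> 1) n ->
  paraorthogonal t0 mu n tau d -> d != 0 -> size d = (nsum n).+2.
Proof.
set N := nsum n => mufin normal dpara d0; have [szd dinv _] := dpara.
apply/eqP; rewrite eqn_leq szd /=; apply: contraNT d0; rewrite -ltnNge ltnS => szd'.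
have dN : d`_N.+1 = 0 by rewrite nth_default.
have /factor_theorem [Y dY] : root d 0.
  rewrite /root horner_coef0 (tau_invariant_recip_poly szd dinv) coef_poly /=.
  by rewrite subn0 dN conjc0 mulr0.
rewrite polyC0 subr0 in dY.
have szY : (size Y <= N)%N.
  have [-> | Y0] := eqVneq Y 0; first by rewrite size_poly0.
  by rewrite -ltnS -(size_mulX Y0) -dY.
have XE x : 'X.[expi x] = (1 : R)%:C * (1 * expi x) by rewrite hornerX !mul1r.
rewrite dY (paraorthogonal_factor_eq0 (tau := tau) mufin _ normal _ szY XE) ?mul0r ?oner_neq0 //.
- exact: bounded_measurable_cst.
- by rewrite -dY.
Qed.

Lemma paraorthogonal_roots_unimodular r (mu : 'I_r -> {measure set R -> \bar R}) n tau
    (d : {poly C}) :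
  (forall j, (mu j setT < +oo)%E) ->
  (forall z0 : C, z0 != 0 -> `|z0| != 1 ->
     phi_normal t0 mu (fun x => Normc.normc (expi x - z0) ^+ 2) n) ->
  paraorthogonal t0 mu n tau d -> size d = (nsum n).+2 ->
  forall z, root d z -> `|z| = 1.
Proof.
set N := nsum n => mufin normal dpara szd z dz; have [szd' dinv _] := dpara.
have dE := tau_invariant_recip_poly szd' dinv.
have z0 : z != 0 by apply: contraTneq dz => ->; exact: recip_poly_root0 dE szd.
apply/eqP; apply: contraT => zn1.
have z1_neq : (conjc z)^-1 != z.
  apply: contraNneq zn1 => z1E.
  by rewrite -sqrp_eq1 ?normr_ge0 // normCK -{1}z1E mulVf ?conjc_eq0.
have [q dq] : exists q, d = q * \prod_(w <- [:: (conjc z)^-1; z]) ('X - w%:P).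
  apply: uniq_roots_prod_XsubC; last by rewrite uniq_rootsE /= inE z1_neq.
  by rewrite /= dz andbT (recip_poly_root_inv_conj dE).
have d0 : d != 0 by rewrite -size_poly_eq0 szd.
have q0 : q != 0 by apply: contraNneq d0 => q0; rewrite dq q0 mul0r.
have szq : (size q <= N)%N.
  move: szd; rewrite dq (size_Mmonic q0 (monic_prod_XsubC _ _ _)) size_prod_XsubC addn3.
  by move=> [->].
suff q00 : q = 0 by rewrite q00 eqxx in q0.
apply: (paraorthogonal_factor_eq0 (tau := tau) mufin (bounded_measurable_sqr_dist z)
  (normal z z0 zn1) _ szq (horner_reflected_pair_expi z0)); first by rewrite -dq.
by rewrite oppr_eq0 invr_eq0 conjc_eq0.
Qed.

End ParaorthogonalZeros.

Theorem theorem4p1 (R : realType) (t0 : R) (r : nat)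
    (mu : 'I_r -> {measure set R -> \bar R}) (n : 'I_r -> nat)
    (tau : R[i]) (d : {poly R[i]}) :
  (* mu_j : finite positive Borel measures on the circle, written in the
     angle variable theta in [t0, t0 + 2 pi), z = e^{i theta} *)
  (forall j, (mu j setT < +oo)%E) ->
  (forall j, mu j (~` `[t0, t0 + 2 * pi[) = 0%E) ->
  (forall j, infinite_set (msupport (mu j))) ->
  (* n is phi-normal for mu *)
  phi_normal t0 mu (fun _ => 1) n ->
  `|tau| = 1 ->
  (* X = lfun t0 (|n|+1) d is a tau-invariant paraorthogonal function, X <> 0 *)
  paraorthogonal t0 mu n tau d ->
  ~ (forall z : R[i], z != 0 -> lfun t0 (nsum n).+1 d z = 0) ->
  (* n is phi-normal for (|z - z0|^2 d mu_j)_j whenever z0 <> 0, |z0| <> 1 *)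
  (forall z0 : R[i], z0 != 0 -> `|z0| != 1 ->
     phi_normal t0 mu (fun t => (Normc.normc (expi t - z0)) ^+ 2) n) ->
  (* z^{(|n|+1)/2} X(z) = sum_j d_j z^j has degree |n|+1, all zeros on the circle *)
  size d = (nsum n).+2 /\ (forall z : R[i], root d z -> `|z| = 1).
Proof.
move=> mufin _ _ normal _ dpara X_neq0 normal_sqr_dist.
have d0 : d != 0 by apply/eqP => d0; apply: X_neq0 => z _; rewrite d0 lfun0.
have szd := paraorthogonal_size mufin normal dpara d0.
by split=> //; exact: paraorthogonal_roots_unimodular mufin normal_sqr_dist dpara szd.
Qed.
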